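(* Let $T\in\mathcal{L}(\mathcal{H})$ be an SD operator. Then for every integer $n\ge1$, $T$ is $n$-EP if and only if $T$ is $n$-normal.
   Context: $\mathcal{H}$ is a Hilbert space, $\mathcal{L}(\mathcal{H})$ the bounded operators on it. For $T$ with closed range, $T^\dagger$ is its Moore–Penrose inverse (unique solution of $TT^\dagger T=T$, $T^\dagger TT^\dagger=T^\dagger$, $(T^\dagger T)^*=T^\dagger T$, $(TT^\dagger)^*=TT^\dagger$). $T$ is SD if it has closed range and $T^*T^\dagger=T^\dagger T^*$. $T$ is $n$-EP if it has closed range and $T^nT^\dagger=T^\dagger T^n$. $T$ is $n$-normal if $T^nT^*=T^*T^n$. *)

From mathcomp Require Import all_boot all_order all_algebra.
From mathcomp Require Import complex.
From mathcomp Require Import reals.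
Set Implicit Arguments. Unset Strict Implicit. Unset Printing Implicit Defensive.
Import Order.TTheory GRing.Theory Num.Theory.
Local Open Scope ring_scope.

Section Hilbert.
Variable R : realType.
Local Notation C := (R[i]).
Variable V : lmodType C.
Variable ip : V -> V -> C.

Definition is_inner_product : Prop :=
  [/\ (forall (a : C) (x y z : V), ip (a *: x + y) z = a * ip x z + ip y z),
      (forall x y : V, ip y x = Num.conj (ip x y)),
      (forall x : V, 0 <= ip x x) &
      (forall x : V, ip x x = 0 -> x = 0)].

Definition hnorm (x : V) : R := Num.sqrt (complex.Re (ip x x)).

Definition hcvg (u : nat -> V) (x : V) : Prop :=
  forall e : R, 0 < e -> exists N : nat, forall n, (N <= n)%N -> hnorm (u n - x) < e.

Definition hcauchy (u : nat -> V) : Prop :=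
  forall e : R, 0 < e -> exists N : nat, forall m n, (N <= m)%N -> (N <= n)%N ->
    hnorm (u m - u n) < e.

Definition is_hilbert : Prop :=
  is_inner_product /\ forall u, hcauchy u -> exists x, hcvg u x.

Definition bounded_op (T : V -> V) : Prop :=
  (forall (a : C) (x y : V), T (a *: x + y) = a *: T x + T y) /\
  exists M : R, forall x, hnorm (T x) <= M * hnorm x.

Definition is_adjoint (T S : V -> V) : Prop :=
  bounded_op S /\ forall x y, ip (T x) y = ip x (S y).

Definition closed_range (T : V -> V) : Prop :=
  forall (u : nat -> V) (x : V), (forall n, exists y, u n = T y) -> hcvg u x ->
    exists y, x = T y.

Definition is_MP_inverse (T D : V -> V) : Prop :=
  [/\ bounded_op D,
      T \o D \o T = T,
      D \o T \o D = D,
      is_adjoint (D \o T) (D \o T) &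
      is_adjoint (T \o D) (T \o D)].

Definition op_pow (T : V -> V) (n : nat) : V -> V := fun x => iter n T x.

Definition is_SD (T Tstar Tdag : V -> V) : Prop :=
  closed_range T /\ Tstar \o Tdag = Tdag \o Tstar.

Definition is_nEP (n : nat) (T Tdag : V -> V) : Prop :=
  closed_range T /\ op_pow T n \o Tdag = Tdag \o op_pow T n.

Definition is_nnormal (n : nat) (T Tstar : V -> V) : Prop :=
  op_pow T n \o Tstar = Tstar \o op_pow T n.

End Hilbert.

From mathcomp Require Import all_boot all_order all_algebra.
From mathcomp Require Import complex.
From mathcomp Require Import reals.
From Stdlib Require Import FunctionalExtensionality.
Set Implicit Arguments. Unset Strict Implicit. Unset Printing Implicit Defensive.
Import GRing.Theory Num.Theory.
Local Open Scope ring_scope.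

(* Write P = T T^dagger, Q = T^dagger T and G = T T^*.
   (<=) An operator S such that S and S^* both commute with T leaves R(P) and
   R(Q) invariant, and so does S^*; passing to adjoints, S commutes with P and
   Q, hence with T^dagger = Q T^dagger P.  Apply this to S = T^n: its adjoint
   T^*^n commutes with T because T^n commutes with T^*.
   (=>) The SD condition says that T commutes with G on R(T), i.e.
   T G = G T P, hence T^n G = G T^n P.  Since T^* = T^dagger G and T^n
   commutes with T^dagger, this gives
   T^n T^* = T^dagger G T^n P = T^* T^n P = T^* T^n. *)

Section AdjointPairs.
Variables (R : realType) (V : lmodType R[i]) (ip : V -> V -> R[i]).
Hypothesis ip_inner : is_inner_product ip.

Definition adjoint_pair (A B : V -> V) := forall x y, ip (A x) y = ip x (B y).

Lemma ip_injl x y : (forall z, ip x z = ip y z) -> x = y.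
Proof.
case: ip_inner => ipDl _ _ ip_def eq_xy.
have ipBl u v z : ip (u - v) z = ip u z - ip v z.
  by rewrite addrC -scaleN1r ipDl mulN1r addrC.
by apply/eqP; rewrite -subr_eq0; apply/eqP/ip_def; rewrite ipBl eq_xy subrr.
Qed.

Lemma adjoint_pair_sym A B : adjoint_pair A B -> adjoint_pair B A.
Proof.
by case: ip_inner => _ ip_conj _ _ AB x y; rewrite ip_conj -AB ip_conj conjCK.
Qed.

Lemma adjoint_pair_comp A A' B B' :
  adjoint_pair A A' -> adjoint_pair B B' -> adjoint_pair (A \o B) (B' \o A').
Proof. by move=> AA' BB' x y /=; rewrite AA' BB'. Qed.

Lemma op_powS (A : V -> V) n x : op_pow A n.+1 x = A (op_pow A n x).
Proof. by []. Qed.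

Lemma op_pow_comm (A : V -> V) n x : op_pow A n (A x) = A (op_pow A n x).
Proof. by rewrite /op_pow /= -iterSr. Qed.

Lemma adjoint_pair_pow A A' n :
  adjoint_pair A A' -> adjoint_pair (op_pow A n) (op_pow A' n).
Proof.
move=> AA'; elim: n => [|n IHn] x y //.
by rewrite !op_powS AA' IHn op_pow_comm.
Qed.

Lemma adjoint_pair_uniq A B X Y :
  adjoint_pair A X -> adjoint_pair B Y -> X =1 Y -> A =1 B.
Proof. by move=> AX BY XY x; apply: ip_injl => z; rewrite AX BY XY. Qed.

Lemma adjoint_pair_commute A A' B B' :
  adjoint_pair A A' -> adjoint_pair B B' ->
  (forall x, A (B x) = B (A x)) -> forall x, A' (B' x) = B' (A' x).
Proof.
move=> /adjoint_pair_sym A'A /adjoint_pair_sym B'B AB.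
by apply: adjoint_pair_uniq (adjoint_pair_comp A'A B'B)
  (adjoint_pair_comp B'B A'A) _ => x /=; rewrite AB.
Qed.

Section MoorePenrose.
Variables (T Tstar Tdag : V -> V).
Hypothesis T_adj : adjoint_pair T Tstar.
Hypothesis TdT : forall x, T (Tdag (T x)) = T x.
Hypothesis dTd : forall x, Tdag (T (Tdag x)) = Tdag x.
Hypothesis P_herm : adjoint_pair (T \o Tdag) (T \o Tdag).
Hypothesis Q_herm : adjoint_pair (Tdag \o T) (Tdag \o T).

(* In lemma names, projR is the projection P = T Tdag onto the range of T and
   projC the projection Q = Tdag T onto its coimage, the range of Tstar. *)

Lemma adjoint_projR x : Tstar (T (Tdag x)) = Tstar x.
Proof.
apply: (adjoint_pair_uniq (adjoint_pair_comp (adjoint_pair_sym T_adj) P_herm)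
  (adjoint_pair_sym T_adj)) => y /=.
exact: TdT.
Qed.

Lemma projC_adjoint x : Tdag (T (Tstar x)) = Tstar x.
Proof.
apply: (adjoint_pair_uniq (adjoint_pair_comp Q_herm (adjoint_pair_sym T_adj))
  (adjoint_pair_sym T_adj)) => y /=.
exact: TdT.
Qed.

Section Commuting.
Variable S : V -> V.
Hypothesis ST : forall x, S (T x) = T (S x).

Lemma projR_invariant x : T (Tdag (S (T (Tdag x)))) = S (T (Tdag x)).
Proof. by rewrite ST TdT. Qed.

Lemma projC_invariant x : Tdag (T (S (Tdag (T x)))) = Tdag (T (S x)).
Proof. by rewrite -ST TdT ST. Qed.

End Commuting.

Lemma MP_inverse_commute S Sstar :
  adjoint_pair S Sstar ->
  (forall x, S (T x) = T (S x)) -> (forall x, Sstar (T x) = T (Sstar x)) ->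
  forall x, S (Tdag x) = Tdag (S x).
Proof.
move=> S_adj ST SstarT.
have PS x : T (Tdag (S x)) = S (T (Tdag x)).
  rewrite -(projR_invariant ST).
  apply: (adjoint_pair_uniq (adjoint_pair_comp P_herm S_adj)
    (adjoint_pair_comp (adjoint_pair_comp P_herm S_adj) P_herm)) => y /=.
  by rewrite projR_invariant.
have SQ x : S (Tdag (T x)) = Tdag (T (S x)).
  rewrite -(projC_invariant ST).
  apply: (adjoint_pair_uniq (adjoint_pair_comp S_adj Q_herm)
    (adjoint_pair_comp Q_herm (adjoint_pair_comp S_adj Q_herm))) => y /=.
  by rewrite projC_invariant.
by move=> x; rewrite -{1}[Tdag x]dTd SQ -ST -PS dTd.
Qed.

Section StarDagger.
Hypothesis SD : forall x, Tstar (Tdag x) = Tdag (Tstar x).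

Lemma SD_commute_TTstar x : T (T (Tstar x)) = T (Tstar (T (T (Tdag x)))).
Proof.
have TTstar_herm := adjoint_pair_comp T_adj (adjoint_pair_sym T_adj).
apply: (adjoint_pair_uniq (adjoint_pair_comp T_adj TTstar_herm)
  (adjoint_pair_comp TTstar_herm (adjoint_pair_comp T_adj P_herm))) => y /=.
by rewrite -{1}[Tstar y]projC_adjoint SD.
Qed.

Lemma SD_pow_commute_TTstar n x :
  op_pow T n (T (Tstar x)) = T (Tstar (op_pow T n (T (Tdag x)))).
Proof.
elim: n => [|n IHn]; first by rewrite /op_pow /= adjoint_projR.
by rewrite !op_powS IHn SD_commute_TTstar (projR_invariant (op_pow_comm T n)).
Qed.

Lemma SD_pow_commute_adjoint n :
  (forall x, op_pow T n (Tdag x) = Tdag (op_pow T n x)) ->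
  forall x, op_pow T n (Tstar x) = Tstar (op_pow T n x).
Proof.
move=> nEP x.
rewrite -[Tstar x]projC_adjoint nEP SD_pow_commute_TTstar projC_adjoint.
by rewrite op_pow_comm nEP adjoint_projR.
Qed.

End StarDagger.
End MoorePenrose.
End AdjointPairs.

Theorem mainTheorem10 (R : realType) (V : lmodType (R[i])) (ip : V -> V -> R[i])
  (T Tstar Tdag : V -> V) :
  is_hilbert ip ->
  bounded_op ip T ->
  is_adjoint ip T Tstar ->
  closed_range ip T ->
  is_MP_inverse ip T Tdag ->
  is_SD ip T Tstar Tdag ->
  forall n : nat, (1 <= n)%N ->
    (is_nEP ip n T Tdag <-> is_nnormal n T Tstar).
Proof.
move=> [ip_inner _] _ [_ T_adj] T_closed [_ TdT dTd [_ Q_herm] [_ P_herm]] [_ SD].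
have TdTx x : T (Tdag (T x)) = T x := equal_f TdT x.
have dTdx x : Tdag (T (Tdag x)) = Tdag x := equal_f dTd x.
have SDx x : Tstar (Tdag x) = Tdag (Tstar x) := equal_f SD x.
move=> n _; split=> [[_ nEP] | nnormal].
- have nEPx y : op_pow T n (Tdag y) = Tdag (op_pow T n y) := equal_f nEP y.
  apply: functional_extensionality => x.
  exact: (SD_pow_commute_adjoint ip_inner T_adj TdTx P_herm Q_herm SDx nEPx x).
- have S_adj := adjoint_pair_pow n T_adj.
  have nnormalx y : op_pow T n (Tstar y) = Tstar (op_pow T n y).
    exact: (equal_f nnormal y).
  have SstarT := adjoint_pair_commute ip_inner S_adj
    (adjoint_pair_sym ip_inner T_adj) nnormalx.
  split=> //; apply: functional_extensionality => x.
  exact: (MP_inverse_commute ip_inner TdTx dTdx P_herm Q_herm S_adj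
    (op_pow_comm T n) SstarT x).
Qed.
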